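(* Let $s\in[0,1]$ and let $(L_n)_{n\ge1}$, $(U_n)_{n\ge1}$ be random variables on a common probability space such that, almost surely, for every $n\ge1$: $L_n\le U_n$; $L_n\in[0,1]$ and $U_n\in[0,1]$; and (for $n\ge2$) $L_{n-1}\le L_n$ and $U_{n-1}\ge U_n$. Suppose moreover that $l_n:=\mathbb{E}L_n$ is nondecreasing with $l_n\to s$ and $u_n:=\mathbb{E}U_n$ is nonincreasing with $u_n\to s$. Let $G_0\sim U(0,1)$ be independent of $(L_n,U_n)_{n\ge1}$. Define $$N:=\inf\{n\ge1:\ G_0\le L_n\ \text{or}\ G_0>U_n\},$$ and $C_s:=1$ if $G_0\le L_N$ and $C_s:=0$ otherwise (i.e. if $G_0>U_N$). Then $N<\infty$ almost surely, $\mathbb{P}(C_s=1)=s$, and $\mathbb{P}(N>n)=u_n-l_n$ for every $n\ge1$.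
   Context: This formalizes ''Algorithm 3'': draw $G_0\sim U(0,1)$ once, then for $n=1,2,\dots$ obtain $L_n,U_n$; output $1$ if $G_0\le L_n$, output $0$ if $G_0>U_n$, otherwise continue with $n+1$. The variables $L_n,U_n$ are not assumed to satisfy $L_n\le s\le U_n$. *)

From HB Require Import structures.
From mathcomp Require Import all_boot all_order all_algebra.
From mathcomp Require Import all_classical all_reals all_analysis.
Set Implicit Arguments. Unset Strict Implicit. Unset Printing Implicit Defensive.
Import Order.TTheory GRing.Theory Num.Theory.
Local Open Scope classical_set_scope.
Local Open Scope ring_scope.

Section algorithm3.
Context {R : realType}.
Context {d : measure_display} {T : measurableType d}.

Definition gen_sigma_family (X Y : nat -> T -> R) : set (set T) :=
  <<s [set E | exists n (A : set R), (1 <= n)%N /\ measurable A /\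
                 (E = X n @^-1` A \/ E = Y n @^-1` A)] >>.

Definition indep_of_family (P : probability T R) (G : T -> R)
    (X Y : nat -> T -> R) : Prop :=
  forall (A : set R) (B : set T), measurable A -> gen_sigma_family X Y B ->
    P (G @^-1` A `&` B) = (P (G @^-1` A) * P B)%E.

Definition stops (L U : nat -> T -> R) (G : T -> R) (n : nat) (x : T) : Prop :=
  G x <= L n x \/ U n x < G x.

Definition N_eq (L U : nat -> T -> R) (G : T -> R) (n : nat) (x : T) : Prop :=
  (1 <= n)%N /\ stops L U G n x /\
  (forall k, (1 <= k < n)%N -> ~ stops L U G k x).

Definition N_finite (L U : nat -> T -> R) (G : T -> R) : set T :=
  [set x | exists n, N_eq L U G n x].

Definition N_gt (L U : nat -> T -> R) (G : T -> R) (n : nat) : set T :=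
  [set x | forall k, (1 <= k <= n)%N -> ~ stops L U G k x].

Definition Cs_one (L U : nat -> T -> R) (G : T -> R) : set T :=
  [set x | exists n, N_eq L U G n x /\ G x <= L n x].

End algorithm3.

(* Everything rests on one identity: if G is uniform on [0, 1] and independent
   of a random variable V with values in [0, 1], then P(G <= V) = E V.  Slicing
   the range of V into the cells [j/k, (j+1)/k[, both P(G <= V, V in cell) and
   E[V; V in cell] lie between j/k and (j+1)/k times the probability of the
   cell, so the two sides differ by at most 1/k.
   Since the L_n and U_n are almost surely nested brackets, {N > n} is almost
   surely {G <= U_n} minus {G <= L_n}, whence P(N > n) = u_n - l_n, which tends
   to 0; and {C_s = 1} is almost surely the increasing union of the events
   {G <= L_n}, whose probabilities l_n tend to s. *)

From HB Require Import structures.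
From mathcomp Require Import all_boot all_order all_algebra.
From mathcomp Require Import all_classical all_reals all_analysis.
From mathcomp Require Import measurable_realfun.
Import Order.TTheory GRing.Theory Num.Theory.
Local Open Scope classical_set_scope.
Local Open Scope ring_scope.

Section measure_lemmas.
Context {d : measure_display} {T : measurableType d} {R : realType}.

Lemma measurable_ler_set {f g : T -> R} :
  measurable_fun setT f -> measurable_fun setT g ->
  measurable [set x | f x <= g x].
Proof.
move=> mf mg; rewrite -[X in measurable X]setTI.
have -> : [set x | f x <= g x] = (fun x => f x <= g x) @^-1` [set true].
  by apply/seteqP; split => x /=.
exact: measurable_fun_ler.
Qed.

Lemma measurable_ltr_set {f g : T -> R} :
  measurable_fun setT f -> measurable_fun setT g ->
  measurable [set x | f x < g x].
Proof.
move=> mf mg; rewrite -[X in measurable X]setTI.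
have -> : [set x | f x < g x] = (fun x => f x < g x) @^-1` [set true].
  by apply/seteqP; split => x /=.
exact: measurable_fun_ltr.
Qed.

Lemma measurable_forall (Q : nat -> bool) {S : nat -> set T} :
  (forall k, measurable (S k)) -> measurable [set x | forall k, Q k -> S k x].
Proof.
move=> mS.
have -> : [set x | forall k, Q k -> S k x] =
    \bigcap_k (if Q k then S k else setT).
  apply/seteqP; split => x /= h k; last by move=> Qk; have := h k I; rewrite Qk.
  by case: ifPn => // /h.
by apply: bigcapT_measurable => k; case: ifP.
Qed.

Lemma ae_eq_measure (mu : {measure set T -> \bar R}) {A B : set T} :
  measurable A -> measurable B -> {ae mu, forall x, A x <-> B x} ->
  mu A = mu B.
Proof.
move=> mA mB [N [mN N0 AB]].
have null C : measurable C -> mu (C `&` N) = 0%E.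
  by move=> mC; apply: (subset_measure0 (measurableI _ _ mC mN) mN) => // x [].
have eqD : B `\` N = A `\` N.
  apply/seteqP; split => x [Cx Nx]; split => //; apply: contrapT => Cx';
    by apply: Nx; apply: (AB x) => /= h; apply: Cx'; apply/h.
rewrite -(setUIDK A N) -(setUIDK B N) eqD !(setUC (_ `&` N)) !measureU0 ?null //.
all: by [apply: measurableD | apply: measurableI].
Qed.

Lemma measure_finite_partition (mu : {measure set T -> \bar R}) {A : set T}
    {F : nat -> set T} {n : nat} :
  measurable A -> (forall j, measurable (F j)) -> trivIset setT F ->
  mu (~` \big[setU/set0]_(j < n) F j) = 0%E ->
  mu A = (\sum_(j < n) mu (A `&` F j))%E.
Proof.
move=> mA mF tF null.
have mUF : measurable (\big[setU/set0]_(j < n) F j).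
  by apply: bigsetU_measurable => j _.
rewrite -{1}(setUIDK A (\big[setU/set0]_(j < n) F j)) measureU0; last 3 first.
- exact: measurableI.
- exact: measurableD.
- by apply: (subset_measure0 (measurableD mA mUF) (measurableC mUF)) => // x [].
rewrite -bigcup_mkord setI_bigcupr bigcup_mkord.
apply: (@measure_semi_additive_ord_I _ _ _ mu (fun j => A `&` F j) n).
- by move=> j _; exact: measurableI.
- by apply: trivIset_setIl; apply: sub_trivIset tF.
- by apply: bigsetU_measurable => j _; exact: measurableI.
Qed.

Lemma integral_finite_partition (mu : {measure set T -> \bar R})
    {f : T -> \bar R} {F : nat -> set T} {n : nat} :
  measurable_fun setT f -> (forall j, measurable (F j)) -> trivIset setT F ->
  mu (~` \big[setU/set0]_(j < n) F j) = 0%E ->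
  (forall x, (\big[setU/set0]_(j < n) F j) x -> 0 <= f x)%E ->
  (\int[mu]_x f x = \sum_(j < n) \int[mu]_(x in F j) f x)%E.
Proof.
move=> mf mF tF null f0.
have mUF : measurable (\big[setU/set0]_(j < n) F j).
  by apply: bigsetU_measurable => j _.
rewrite -(setUv (\big[setU/set0]_(j < n) F j)).
rewrite integral_setU //; last 3 first.
- exact: measurableC mUF.
- by rewrite setUv.
- by rewrite /disj_set setICr.
rewrite [X in (_ + X)%E]null_set_integral //; last 2 first.
- exact: measurableC mUF.
- exact: measurable_funTS.
rewrite adde0 -(big_mkord xpredT F) ge0_integral_bigsetU //.
- by rewrite big_mkord.
- exact: iota_uniq.
- exact: sub_trivIset tF.
- exact: measurable_funTS.
- by move=> x; rewrite big_mkord; exact: f0.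
Qed.

Lemma integral_bounds (mu : {measure set T -> \bar R}) (f : T -> R)
    (F : set T) (a b : R) :
  measurable F -> measurable_fun setT f -> 0 <= a ->
  (forall x, F x -> a <= f x <= b) ->
  (a%:E * mu F <= \int[mu]_(x in F) (f x)%:E <= b%:E * mu F)%E.
Proof.
move=> mF mf a0 fab.
have mfF : measurable_fun F (EFin \o f) by apply/measurable_EFinP/measurable_funTS.
apply/andP; split; rewrite -integral_cst //; apply: ge0_le_integral => //.
- by move=> x /fab /andP[h _]; rewrite /= lee_fin.
- by move=> x /fab /andP[h _]; rewrite /= lee_fin (le_trans a0).
- by move=> x /fab /andP[_ h]; rewrite /= lee_fin.
Qed.

End measure_lemmas.

Lemma preimage_trivIset {aT rT I : Type} {D : set I} (f : aT -> rT)
    {F : I -> set rT} :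
  trivIset D F -> trivIset D (fun i => f @^-1` F i).
Proof. by move=> tF i j Di Dj [x [Fi Fj]]; apply: tF Di Dj _; exists (f x). Qed.

Lemma ereal_eq_of_brackets (R : realType) (x y : \bar R) :
  (forall k : nat, (0 < k)%N -> exists a : \bar R,
     (a <= x <= a + (k%:R^-1)%:E) /\ (a <= y <= a + (k%:R^-1)%:E))%E ->
  x = y.
Proof.
move=> brackets.
suff le_xy (u v : \bar R) : (forall k : nat, (0 < k)%N -> exists a : \bar R,
    (a <= u <= a + (k%:R^-1)%:E) /\ (a <= v <= a + (k%:R^-1)%:E))%E ->
    (u <= v)%E.
  apply/eqP; rewrite eq_le !le_xy // => k k0.
  by have [a [hx hy]] := brackets k k0; exists a.
move=> {}brackets; apply/lee_addgt0Pr => e e0.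
set k := (Num.truncn e^-1).+1.
have [a [/andP[_ ua] /andP[av _]]] := brackets k isT.
apply: (le_trans ua); apply: leeD; first exact: av.
rewrite lee_fin -(invrK e) lef_pV2 ?posrE ?invr_gt0 ?ltr0n //.
exact/ltW/truncnS_gt.
Qed.

Section uniform_cdf.
Context {R : realType}.

Lemma uniform_prob_Iic (c : R) : 0 <= c <= 1 ->
  uniform_prob (@ltr01 R) `]-oo, c] = c%:E.
Proof.
move=> /andP[c0 c1]; rewrite /uniform_prob integral_uniform_pdf.
have -> : `]-oo, c] `&` `[0, 1] = `[0, c]%classic.
  apply/seteqP; split => x /=; rewrite !in_itv /=; first by move=> [-> /andP[-> _]].
  by move=> /andP[x0 xc]; split => //; rewrite x0 (le_trans xc c1).
rewrite (eq_integral (fun=> 1%:E)); last first.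
  move=> x; rewrite inE /= in_itv /= /uniform_pdf => /andP[x0 xc].
  by rewrite x0 (le_trans xc c1) subr0 invr1.
rewrite integral_cst //= lebesgue_measure_itv /= lte_fin mul1e.
by case: ltgtP c0 => // [_ _|<- _]; rewrite ?EFinN ?sube0.
Qed.

Lemma uniform_prob_Iic_le (c : R) : 0 <= c ->
  (uniform_prob (@ltr01 R) `]-oo, c] <= c%:E)%E.
Proof.
move=> c0; have [c1|c1] := leP c 1; first by rewrite uniform_prob_Iic ?c0.
by rewrite (le_trans (probability_le1 _ _)) // lee_fin ltW.
Qed.

End uniform_cdf.

Section grid_cells.
Context {R : realType}.

(* For j < k.+1 these cells partition [0, 1]; the last one is {1}. *)
Definition grid_cell (k j : nat) : set R :=
  `[0, 1] `&` `[j%:R / k%:R, j.+1%:R / k%:R[.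

Lemma grid_cell_trivIset (k : nat) : (0 < k)%N -> trivIset setT (grid_cell k).
Proof.
move=> k0 i j _ _ [x [[_ ix] [_ jx]]].
move: ix jx; rewrite /= !in_itv /= => /andP[ix xi] /andP[jx xj].
have kinv0 : 0 < k%:R^-1 :> R by rewrite invr_gt0 ltr0n.
suff /andP[] : (i < j.+1)%N && (j < i.+1)%N.
  by rewrite !ltnS => ij ji; apply/anti_leq/andP.
rewrite -!(ltr_nat R) -[X in X && _](ltr_pM2r kinv0) -[X in _ && X](ltr_pM2r kinv0).
by rewrite (le_lt_trans ix xj) (le_lt_trans jx xi).
Qed.

Lemma bigsetU_grid_cell (k : nat) : (0 < k)%N ->
  \big[setU/set0]_(j < k.+1) grid_cell k j = `[0, 1]%classic.
Proof.
move=> k0; rewrite -bigcup_mkord; apply/seteqP; split => [x [j _ []] //|x x01].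
have k0' : 0 < k%:R :> R by rewrite ltr0n.
move: (x01); rewrite /= in_itv /= => /andP[x0 x1].
have xk0 : 0 <= x * k%:R by rewrite mulr_ge0 // ltW.
exists (Num.truncn (x * k%:R)).
  rewrite /= truncn_lt_nat // (le_lt_trans (_ : _ <= k%:R)) ?ltr_nat //.
  by rewrite ler_piMl // ltW.
split => //; rewrite /= in_itv /= ler_pdivrMr // ltr_pdivlMr //.
exact: truncn_itv.
Qed.

Lemma grid_cell_sub (k j : nat) :
  grid_cell k j `<=` `[j%:R / k%:R, j.+1%:R / k%:R]%classic.
Proof. by move=> x [_]; rewrite /= !in_itv /= => /andP[-> /ltW]. Qed.

End grid_cells.

Section uniform_threshold.
Context {R : realType} {d : measure_display} {T : measurableType d}.
Variables (P : probability T R) (G : {RV P >-> R}) (V : T -> R).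
Hypotheses (mV : measurable_fun setT V)
  (G_uniform : forall A, measurable A ->
     distribution P G A = uniform_prob (@ltr01 R) A)
  (GV_indep : forall A B, measurable A -> measurable B ->
     P (G @^-1` A `&` V @^-1` B) = (P (G @^-1` A) * P (V @^-1` B))%E)
  (V01 : {ae P, forall x, 0 <= V x <= 1}).

Let X := [set x | G x <= V x].

Lemma slice_prob_bounds (a b : R) (B : set R) :
  measurable B -> B `<=` `[a, b] -> 0 <= a <= 1 -> a <= b ->
  (a%:E * P (V @^-1` B) <= P (X `&` V @^-1` B) <= b%:E * P (V @^-1` B))%E.
Proof.
move=> mB Bab a01 ab.
have mVB : measurable (V @^-1` B) by rewrite -[_ @^-1` _]setTI; exact: mV.
have mX : measurable X by apply: measurable_ler_set.
have mGc c : measurable (G @^-1` `]-oo, c]) by exact: measurable_funPTI.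
have VB x : (V @^-1` B) x -> a <= V x <= b by move=> /Bab; rewrite /= in_itv.
apply/andP; split.
  rewrite -(uniform_prob_Iic _ a01) -G_uniform // -GV_indep //.
  apply: le_measure; rewrite ?inE.
  - exact: measurableI.
  - exact: measurableI.
  - move=> x [/= Ga Bx]; split => //=; have /andP[aV _] := VB x Bx.
    by move: Ga; rewrite in_itv /= => /le_trans; apply.
have XB_sub : (P (X `&` V @^-1` B) <= P (G @^-1` `]-oo, b] `&` V @^-1` B))%E.
  apply: le_measure; rewrite ?inE; [exact: measurableI | exact: measurableI |].
  move=> x [/= GV Bx]; split => //=; have /andP[_ Vb] := VB x Bx.
  by rewrite in_itv /= (le_trans GV Vb).
apply: (le_trans XB_sub); rewrite GV_indep //; apply: lee_wpmul2r => //.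
have := G_uniform _ (measurable_itv `]-oo, b]).
rewrite /distribution /pushforward /= => ->.
by apply: uniform_prob_Iic_le; case/andP: a01 => a0 _; exact: le_trans ab.
Qed.

Lemma prob_uniform_le_expectation : (P X = 'E_P[V])%E.
Proof.
apply: ereal_eq_of_brackets => k k0.
pose F j := V @^-1` grid_cell k j.
have mF j : measurable (F j).
  by rewrite /F -[_ @^-1` _]setTI; apply: mV => //; apply: measurableI.
have tF : trivIset setT F := preimage_trivIset V (@grid_cell_trivIset R k k0).
have null : P (~` \big[setU/set0]_(j < k.+1) F j) = 0%E.
  have [N [mN N0 V01N]] := V01.
  apply: (subset_measure0 _ mN) => //.
    by apply: measurableC; apply: bigsetU_measurable.
  move=> x /= UFx; apply: V01N => /= V01x; apply: UFx.
  by rewrite -bigcup_mkord -preimage_bigcup bigcup_mkord bigsetU_grid_cell //= in_itv.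
pose lo (j : nat) : \bar R := (j%:R / k%:R)%:E.
have cells j : (j < k.+1)%N ->
    (lo j * P (F j) <= P (X `&` F j) <= lo j.+1 * P (F j))%E /\
    (lo j * P (F j) <= \int[P]_(x in F j) (V x)%:E <= lo j.+1 * P (F j))%E.
  move=> jk; have k0' : 0 < k%:R :> R by rewrite ltr0n.
  have j0 : 0 <= j%:R / k%:R :> R by rewrite divr_ge0 // ltW.
  split.
    apply: slice_prob_bounds (grid_cell_sub k j) _ _.
    - by apply: measurableI.
    - by rewrite j0 ler_pdivrMr // mul1r ler_nat -ltnS.
    - by rewrite ler_pM2r ?invr_gt0 // ler_nat.
  apply: integral_bounds => // x /grid_cell_sub.
  by rewrite /= in_itv.
have sumP : (\sum_(j < k.+1) P (F j) = 1)%E.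
  rewrite -(probability_setT P) (measure_finite_partition P measurableT mF tF null).
  by apply: eq_bigr => j _; rewrite setTI.
exists (\sum_(j < k.+1) lo j * P (F j))%E.
have upper : (\sum_(j < k.+1) lo j.+1 * P (F j) =
    \sum_(j < k.+1) lo j * P (F j) + (k%:R^-1)%:E)%E.
  under eq_bigr do rewrite /lo -natr1 mulrDl mul1r EFinD muleDl ?fin_num_measure //.
  by rewrite big_split /= -ge0_sume_distrr ?sumP ?mule1.
have mX : measurable X by apply: measurable_ler_set.
have mVE : measurable_fun setT (fun x => (V x)%:E) by exact/measurable_EFinP.
rewrite -upper (measure_finite_partition P mX mF tF null).
rewrite expectation.unlock (integral_finite_partition P mVE mF tF null); last first.
  move=> x; rewrite -bigcup_mkord -preimage_bigcup bigcup_mkord.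
  by rewrite bigsetU_grid_cell //= in_itv /= lee_fin => /andP[].
by split; apply/andP; split; apply: lee_sum => j _;
  have [/andP[]+ + /andP[]] := cells j (ltn_ord j).
Qed.

End uniform_threshold.

Definition nested_brackets {R : realType} {T : Type} (L U : nat -> T -> R)
    (x : T) : Prop :=
  forall n, (1 <= n)%N ->
    L n x <= U n x /\ 0 <= L n x <= 1 /\ 0 <= U n x <= 1 /\
    ((2 <= n)%N -> L n.-1 x <= L n x /\ U n x <= U n.-1 x).

Section pathwise.
Context {R : realType} {d : measure_display} {T : measurableType d}.
Context {L U : nat -> T -> R} {G : T -> R}.

Lemma exists_first_stop {x : T} {k : nat} : (1 <= k)%N -> stops L U G k x ->
  exists2 N, N_eq L U G N x & (N <= k)%N.
Proof.
move=> k1 sk.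
pose p j := (0 < j)%N && `[< stops L U G j x >].
have pk : p k by rewrite /p k1; exact/asboolP.
case: (ex_minnP (ex_intro p k pk)) => N /andP[N1 /asboolP sN] minN.
exists N; last exact: minN.
split => //; split => // j /andP[j1 jN] sj.
suff : (N <= j)%N by rewrite leqNgt jN.
by apply: minN; rewrite /p j1; exact/asboolP.
Qed.

Context {x : T}.
Hypothesis hx : nested_brackets L U x.

Lemma nested_brackets_mono {k n : nat} : (1 <= k)%N -> (k <= n)%N ->
  L k x <= L n x /\ U n x <= U k x.
Proof.
move=> k1; elim: n => [|n IH]; first by rewrite leqn0 => /eqP k0; rewrite k0 in k1.
rewrite leq_eqVlt => /orP[/eqP -> //|]; rewrite ltnS => kn.
have [Lkn Unk] := IH kn.
have [_ [_ [_ /(_ (leq_trans k1 kn))[LnS USn]]]] := hx n.+1 (leq_trans k1 (leqW kn)).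
by split; [exact: le_trans LnS | exact: le_trans Unk].
Qed.

Lemma N_gt_nested (n : nat) : (1 <= n)%N ->
  N_gt L U G n x <-> G x <= U n x /\ ~ G x <= L n x.
Proof.
move=> n1; split=> [stay | [GU GL] k /andP[k1 kn]].
  have /= := stay n; rewrite n1 leqnn => /(_ isT) nstop.
  by split=> [|GL]; [rewrite leNgt; apply/negP => UG|]; apply: nstop; [right|left].
have [Lkn Unk] := nested_brackets_mono k1 kn.
case=> [Gk | UkG]; first by apply: GL; exact: le_trans Lkn.
by have := lt_le_trans UkG (le_trans GU Unk); rewrite ltxx.
Qed.

Lemma Cs_one_nested : Cs_one L U G x <-> exists2 n, (1 <= n)%N & G x <= L n x.
Proof.
split=> [[n [[n1 _] GL]] | [n n1 GL]]; first by exists n.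
have [N NeqN Nn] := exists_first_stop n1 (or_introl GL).
have [N1 [[GLN | UNG] _]] := NeqN; first by exists N.
have [_ UnN] := nested_brackets_mono N1 Nn.
have [LU _] := hx n n1.
by have := lt_le_trans UNG (le_trans GL (le_trans LU UnN)); rewrite ltxx.
Qed.

End pathwise.

Section stopping_events.
Context {R : realType} {d : measure_display} {T : measurableType d}.
Context {L U : nat -> T -> R} {G : T -> R}.
Hypotheses (mL : forall n, measurable_fun setT (L n))
  (mU : forall n, measurable_fun setT (U n)) (mG : measurable_fun setT G).

Lemma measurable_stops n : measurable [set x | stops L U G n x].
Proof.
by apply: measurableU; [exact: measurable_ler_set | exact: measurable_ltr_set].
Qed.

Lemma measurable_N_gt n : measurable (N_gt L U G n).
Proof.
have := measurable_forall (fun k => 1 <= k <= n)%N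
  (fun k => measurableC (measurable_stops k)).
by congr measurable; apply/seteqP; split => x.
Qed.

Lemma measurable_N_eq n : measurable [set x | N_eq L U G n x].
Proof.
case: n => [|n].
  by rewrite (_ : [set x | _] = set0) //; apply/seteqP; split => x // [].
rewrite (_ : [set x | _] = [set x | stops L U G n.+1 x] `&` N_gt L U G n).
  by apply: measurableI; [exact: measurable_stops | exact: measurable_N_gt].
by apply/seteqP; split => x /= [] => [_ [sn before] | sn before]; do !split => //.
Qed.

Lemma measurable_N_finite : measurable (N_finite L U G).
Proof.
rewrite (_ : N_finite L U G = \bigcup_n [set x | N_eq L U G n x]).
  by apply: bigcupT_measurable => n; exact: measurable_N_eq.
by apply/seteqP; split => [x [n Nn]|x [n _ Nn]]; exists n.
Qed.

Lemma measurable_Cs_one : measurable (Cs_one L U G).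
Proof.
rewrite (_ : Cs_one L U G =
    \bigcup_n ([set x | N_eq L U G n x] `&` [set x | G x <= L n x])).
  apply: bigcupT_measurable => n.
  by apply: measurableI; [exact: measurable_N_eq | exact: measurable_ler_set].
by apply/seteqP; split => [x [n Nn]|x [n _ Nn]]; exists n.
Qed.

End stopping_events.

Section algorithm3.
Context {R : realType} {d : measure_display} {T : measurableType d}.
Context (P : probability T R) {L U : nat -> T -> R} {G : {RV P >-> R}}.
Hypotheses (mL : forall n, measurable_fun setT (L n))
  (mU : forall n, measurable_fun setT (U n))
  (brackets : {ae P, forall x, nested_brackets L U x})
  (G_uniform : forall A, measurable A ->
     distribution P G A = uniform_prob (@ltr01 R) A)
  (G_indep : indep_of_family P G L U).

Let mG : measurable_fun setT G := @measurable_funPT _ _ _ _ G.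

Lemma prob_G_le_L n : (1 <= n)%N ->
  P [set x | G x <= L n x] = 'E_P[L n]%E.
Proof.
move=> n1; apply: prob_uniform_le_expectation => //.
- move=> A B mA mB; apply: G_indep => //; apply: sub_sigma_algebra.
  by exists n, B; do !split => //; left.
- by apply: filterS brackets => x /(_ n n1) [_ []].
Qed.

Lemma prob_G_le_U n : (1 <= n)%N ->
  P [set x | G x <= U n x] = 'E_P[U n]%E.
Proof.
move=> n1; apply: prob_uniform_le_expectation => //.
- move=> A B mA mB; apply: G_indep => //; apply: sub_sigma_algebra.
  by exists n, B; do !split => //; right.
- by apply: filterS brackets => x /(_ n n1) [_ [_ []]].
Qed.

Lemma prob_N_gt n : (1 <= n)%N ->
  P (N_gt L U G n) = ('E_P[U n] - 'E_P[L n])%E.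
Proof.
move=> n1.
have mGU := measurable_ler_set mG (mU n); have mGL := measurable_ler_set mG (mL n).
rewrite (ae_eq_measure P (measurable_N_gt mL mU mG n) (measurableD mGU mGL));
  last first.
  by apply: filterS brackets => x hx; exact: N_gt_nested.
rewrite measureD //; last by rewrite (le_lt_trans (probability_le1 _ _)) ?ltry.
rewrite -prob_G_le_U // -prob_G_le_L //; congr (_ - _)%E.
apply: (ae_eq_measure P (measurableI _ _ mGU mGL) mGL).
apply: filterS brackets => x hx; split=> [[] //|GL]; split=> //=.
by apply: le_trans GL _; have [] := hx n n1.
Qed.

Lemma prob_Cs_one (s : R) : 'E_P[L n]%E @[n --> \oo] --> s%:E ->
  P (Cs_one L U G) = s%:E.
Proof.
move=> Lcvg.
(* The union over k <= n makes B nondecreasing everywhere, not only a.s. *)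
pose B n := \bigcup_(k in [set k | 1 <= k <= n]%N) [set x | G x <= L k x].
have mB n : measurable (B n).
  by apply: bigcup_measurable => k _; exact: measurable_ler_set.
have ndB : nondecreasing_seq B.
  move=> i j ij; apply/subsetPset => x [k /andP[k1 ki] Gk].
  by exists k; rewrite //= k1 (leq_trans ki ij).
have PB n : P (B n.+1) = 'E_P[L n.+1]%E.
  rewrite -prob_G_le_L //.
  apply: (ae_eq_measure P (mB _) (measurable_ler_set mG (mL _))).
  apply: filterS brackets => x hx; split => [[k /andP[k1 kn] Gk] | GL].
    by apply: le_trans Gk _; have [] := nested_brackets_mono hx k1 kn.
  by exists n.+1; rewrite //= leqnn.
rewrite (ae_eq_measure P (measurable_Cs_one mL mU mG) (bigcupT_measurable _ mB));
  last first.
  apply: filterS brackets => x hx; apply: iff_trans (Cs_one_nested hx) _.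
  split => [[n n1 GL] | [n _ [k /andP[k1 _] GL]]]; last by exists k.
  by exists n => //; exists n; rewrite //= n1 leqnn.
have := nondecreasing_cvg_mu (mu := P) mB (bigcupT_measurable _ mB) ndB.
rewrite -cvg_shiftS /= (funext PB) => PBcvg.
by apply: (cvg_unique _ PBcvg); move: Lcvg; rewrite -cvg_shiftS.
Qed.

Lemma prob_N_finite (s : R) : 'E_P[L n]%E @[n --> \oo] --> s%:E ->
  'E_P[U n]%E @[n --> \oo] --> s%:E -> P (N_finite L U G) = 1%E.
Proof.
move=> Lcvg Ucvg.
have mNF := measurable_N_finite mL mU mG.
rewrite -(setCK (N_finite L U G)) probability_setC; last exact: measurableC.
suff -> : P (~` N_finite L U G) = 0%E by rewrite sube0.
have le_gap n : (1 <= n)%N ->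
    (P (~` N_finite L U G) <= 'E_P[U n] - 'E_P[L n])%E.
  move=> n1; rewrite -prob_N_gt //.
  apply: le_measure; rewrite ?inE; [exact: measurableC | exact: measurable_N_gt |].
  move=> x NFx k /andP[k1 _] sk; apply: NFx.
  by have [N NeqN _] := exists_first_stop k1 sk; exists N.
have gap : ('E_P[U n] - 'E_P[L n])%E @[n --> \oo] --> 0%E.
  by have := cvgeB _ Ucvg Lcvg; rewrite subee //; apply.
apply/eqP; rewrite eq_le measure_ge0 andbT.
rewrite -(cvg_lim _ gap) //; apply: lime_ge; first by apply/cvg_ex; exists 0%E.
by exists 1%N => // n /= n1; exact: le_gap.
Qed.

End algorithm3.

Theorem lemma2 (R : realType) (d : measure_display) (T : measurableType d)
  (P : probability T R) (s : R) (L U : nat -> {RV P >-> R}) (G0 : {RV P >-> R}) :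
  0 <= s <= 1 ->
  {ae P, forall x, forall n, (1 <= n)%N ->
     L n x <= U n x /\ 0 <= L n x <= 1 /\ 0 <= U n x <= 1 /\
     ((2 <= n)%N -> L n.-1 x <= L n x /\ U n x <= U n.-1 x)} ->
  (forall n, (1 <= n)%N -> ('E_P[L n] <= 'E_P[L n.+1])%E) ->
  ('E_P[L n] @[n --> \oo] --> s%:E)%E ->
  (forall n, (1 <= n)%N -> ('E_P[U n.+1] <= 'E_P[U n])%E) ->
  ('E_P[U n] @[n --> \oo] --> s%:E)%E ->
  (forall A : set R, measurable A ->
     distribution P G0 A = uniform_prob (@ltr01 R) A) ->
  indep_of_family P G0 (fun n => L n : T -> R) (fun n => U n : T -> R) ->
  P (N_finite (fun n => L n) (fun n => U n) G0) = 1%E /\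
  P (Cs_one (fun n => L n) (fun n => U n) G0) = s%:E /\
  (forall n, (1 <= n)%N ->
     P (N_gt (fun n => L n) (fun n => U n) G0 n) = ('E_P[U n] - 'E_P[L n])%E).
Proof.
move=> _ brackets _ Lcvg _ Ucvg G_uniform G_indep.
have mL n : measurable_fun setT (L n : T -> R) by [].
have mU n : measurable_fun setT (U n : T -> R) by [].
split; first exact: (prob_N_finite P mL mU brackets G_uniform G_indep s Lcvg Ucvg).
split; first exact: (prob_Cs_one P mL mU brackets G_uniform G_indep s Lcvg).
exact: (prob_N_gt P mL mU brackets G_uniform G_indep).
Qed.
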